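(* Consider the two-route traffic model described in the context, under assumptions (A1)–(A6). The system has a unique equilibrium $\overline{x}\in\Omega$, and $\overline{x}$ is globally asymptotically stable on $\Omega$ (it is Lyapunov stable and every solution starting in $\Omega$ converges to $\overline{x}$).
   Context: Two routes $i=1,2$ connect an origin to a destination. For each route there are positive parameters $B_i$, $C_i$, $F_i$ with $C_i<B_i$; the demand is a constant $\phi>0$. Set $v_i=F_i/C_i$ and $E_i=v_iB_i$. The state $x=(x_1,x_2)\in\Omega:=[0,B_1]\times[0,B_2]$ evolves by $\dot x_i=\min\{\phi R_i(x),S_i(x_i)\}-D_i(x_i)$, $i=1,2$, with $S_i(x_i)=F_i$ if $x_i<C_i$, $S_i(x_i)=\frac{F_i}{B_i-C_i}(B_i-x_i)$ otherwise; $D_i(x_i)=v_ix_i$ if $x_i<C_i$, $D_i(x_i)=F_i$ otherwise. Routing ratios: $R_i(x)=(1-\alpha)r_i^0+\alpha\, r_i(\tau(x))$, with $\alpha\in(0,1]$, $r_1^0,r_2^0\ge0$, $r_1^0+r_2^0=1$, $\tau(x)=(\tau_1(x_1),\tau_2(x_2))$, each $\tau_i$ $C^1$ and strictly increasing, $0\le r_i(\tau(x))\le1$, $r_1(\tau(x))+r_2(\tau(x))=1$ on $\Omega$, $x\mapsto r_i(\tau(x))$ globally Lipschitz and $C^1$ on $\Omega$. Assumptions: (A1) $\phi<F_1+F_2$; (A2)–(A3) as just listed; (A4) $\partial R_i/\partial\tau_j>0$ for $i\ne j$; (A5) $F_i>(1-\alpha)\phi r_i^0$; (A6) $\phi<E_i$,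 $i=1,2$. *)

From Stdlib Require Import Reals.
From Coquelicot Require Import Coquelicot.
Open Scope R_scope.

(* Travel-time functions tau_i : R -> R and route choice functions
   r_i : R * R -> R, where r_i is evaluated at tau(x) = (tau1 x1, tau2 x2). *)
Record model := Model {
  B_1 : R; B_2 : R; C_1 : R; C_2 : R; F_1 : R; F_2 : R;
  phi : R;             (* constant demand *)
  alpha : R;
  r01 : R; r02 : R;
  tau1 : R -> R; tau2 : R -> R;
  r1 : R * R -> R; r2 : R * R -> R
}.

Definition v_1 (m : model) := F_1 m / C_1 m.
Definition v_2 (m : model) := F_2 m / C_2 m.
Definition E_1 (m : model) := v_1 m * B_1 m.
Definition E_2 (m : model) := v_2 m * B_2 m.

Definition in_Omega (m : model) (x : R * R) : Prop :=
  0 <= fst x <= B_1 m /\ 0 <= snd x <= B_2 m.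

Definition supply (B C F : R) (s : R) : R :=
  if Rlt_dec s C then F else F / (B - C) * (B - s).
Definition demand (C F : R) (s : R) : R :=
  if Rlt_dec s C then (F / C) * s else F.

Definition tau (m : model) (x : R * R) : R * R := (tau1 m (fst x), tau2 m (snd x)).

(* routing ratios as functions of the travel-time vector t = tau(x) *)
Definition Rt1 (m : model) (t : R * R) : R := (1 - alpha m) * r01 m + alpha m * r1 m t.
Definition Rt2 (m : model) (t : R * R) : R := (1 - alpha m) * r02 m + alpha m * r2 m t.
Definition Rx1 (m : model) (x : R * R) : R := Rt1 m (tau m x).
Definition Rx2 (m : model) (x : R * R) : R := Rt2 m (tau m x).

Definition fld1 (m : model) (x : R * R) : R :=
  Rmin (phi m * Rx1 m x) (supply (B_1 m) (C_1 m) (F_1 m) (fst x)) - demand (C_1 m) (F_1 m) (fst x).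
Definition fld2 (m : model) (x : R * R) : R :=
  Rmin (phi m * Rx2 m x) (supply (B_2 m) (C_2 m) (F_2 m) (snd x)) - demand (C_2 m) (F_2 m) (snd x).

Definition dist2 (x y : R * R) : R :=
  sqrt ((fst x - fst y) ^ 2 + (snd x - snd y) ^ 2).

Definition is_solution (m : model) (x : R -> R * R) : Prop :=
  (forall t, 0 <= t -> in_Omega m (x t)) /\
  filterlim (fun t => fst (x t)) (at_right 0) (locally (fst (x 0))) /\
  filterlim (fun t => snd (x t)) (at_right 0) (locally (snd (x 0))) /\
  (forall t, 0 < t ->
     is_derive (fun s => fst (x s)) t (fld1 m (x t)) /\
     is_derive (fun s => snd (x s)) t (fld2 m (x t))).

Definition is_equilibrium (m : model) (xb : R * R) : Prop :=
  in_Omega m xb /\ fld1 m xb = 0 /\ fld2 m xb = 0.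

Definition lyapunov_stable (m : model) (xb : R * R) : Prop :=
  forall eps, 0 < eps -> exists delta, 0 < delta /\
    forall x, is_solution m x -> dist2 (x 0) xb < delta ->
      forall t, 0 <= t -> dist2 (x t) xb < eps.

Definition globally_attractive (m : model) (xb : R * R) : Prop :=
  forall x, is_solution m x ->
    forall eps, 0 < eps -> exists T, forall t, T <= t -> dist2 (x t) xb < eps.

Definition C1_on_Omega (m : model) (g : R * R -> R) : Prop :=
  forall x, in_Omega m x ->
    ex_derive (fun s => g (s, snd x)) (fst x) /\
    ex_derive (fun s => g (fst x, s)) (snd x) /\
    continuity_2d_pt (fun a b => Derive (fun s => g (s, b)) a) (fst x) (snd x) /\
    continuity_2d_pt (fun a b => Derive (fun s => g (a, s)) b) (fst x) (snd x).

Definition lipschitz_on_Omega (m : model) (g : R * R -> R) : Prop :=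
  exists L, forall x y, in_Omega m x -> in_Omega m y ->
    Rabs (g x - g y) <= L * dist2 x y.

(* The vector field is cooperative: each rate [f_i] decreases strictly in its own density,
   increases in the other one, and is nonnegative on an empty and nonpositive on a jammed link.
   Hence the nullcline of [f_i] is the graph of a continuous nondecreasing function [h_i], and
   the equilibria are the points [(y, h2 y)] with [y] a fixed point of [h1 o h2]; one exists by
   the intermediate value theorem.  Upper bounds propagate along solutions: once [x2 <= c + eps],
   the rate [f1] is negative above [h1 c + eps], which pushes [x1] below that level.  Starting
   from the jammed corner, [limsup x1] is thus bounded by the iterates of [h1 o h2] from [B1],
   and these decrease to the equilibrium when it is unique.  Boxes just above the equilibrium
   whose upper faces the field crosses inwards trap the solutions, which gives stability.  The
   mirror image [x -> B - x] of a cooperative system is again cooperative, and yields the lower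
   bounds.  In the traffic model the equilibrium is unique by conservation of the demand: two
   ordered equilibria would need more inflow on both routes, while [R1 + R2 = 1]. *)

From Stdlib Require Import Reals Lra Classical ClassicalEpsilon.
From Coquelicot Require Import Coquelicot.
Open Scope R_scope.

(** * Differential inequalities on the real line *)

Lemma continuity_pt_ball (y : R -> R) t eps : continuity_pt y t -> 0 < eps ->
  exists d, 0 < d /\ forall s, Rabs (s - t) < d -> Rabs (y s - y t) < eps.
Proof.
  intros Hy He. destruct (Hy eps He) as [d [Hd Hs]]. exists d. split; [exact Hd|].
  intros s Hst. destruct (Req_dec s t) as [->|Hne].
  - rewrite Rminus_eq_0, Rabs_R0. exact He.
  - apply Hs. repeat split; auto.
Qed.

Lemma is_derive_continuity_pt (y : R -> R) t l : is_derive y t l -> continuity_pt y t.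
Proof.
  intros H. apply continuity_pt_filterlim, (ex_derive_continuous y). exists l. exact H.
Qed.

Lemma is_derive_lt_right (y : R -> R) t l : is_derive y t l -> l < 0 ->
  exists d, 0 < d /\ forall s, t < s < t + d -> y s < y t.
Proof.
  intros H Hl. apply is_derive_Reals in H.
  destruct (H (- l)) as [d Hd]; [lra|].
  exists d. split; [apply cond_pos|]. intros s Hs.
  assert (Hq : Rabs ((y (t + (s - t)) - y t) / (s - t) - l) < - l)
    by (apply Hd; [lra | rewrite Rabs_right; lra]).
  replace (t + (s - t)) with s in Hq by ring.
  apply Rabs_def2 in Hq.
  assert (Hneg : (y s - y t) / (s - t) < 0) by lra.
  assert (Hpos : 0 < s - t) by lra.
  assert (Hdiff : y s - y t = (y s - y t) / (s - t) * (s - t)) by (field; lra).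
  assert (y s - y t < 0); [rewrite Hdiff; nra | lra].
Qed.

Lemma real_induction (P : R -> Prop) t0 :
  P t0 ->
  (forall s, t0 <= s -> P s -> exists d, 0 < d /\ forall r, s <= r < s + d -> P r) ->
  (forall s, t0 < s -> (forall r, t0 <= r < s -> P r) -> P s) ->
  forall t, t0 <= t -> P t.
Proof.
  intros H0 Hstep Hlim t1 Ht1. apply NNPP. intros Hnot.
  set (E := fun r => t0 <= r <= t1 /\ forall q, t0 <= q <= r -> P q).
  assert (HE0 : E t0).
  { split; [lra|]. intros q Hq. replace q with t0 by lra. exact H0. }
  destruct (completeness E) as [s [Hub Hlub]].
  { exists t1. intros r [Hr _]. lra. }
  { exists t0. exact HE0. }
  assert (Hs0 : t0 <= s) by (apply Hub, HE0).
  assert (Hs1 : s <= t1) by (apply Hlub; intros r [Hr _]; lra).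
  assert (Hbefore : forall q, t0 <= q < s -> P q).
  { intros q Hq. apply NNPP. intros Hq'.
    assert (s <= q); [|lra].
    apply Hlub. intros r [_ Hr]. destruct (Rle_dec r q) as [|Hrq]; [assumption|].
    exfalso. apply Hq', Hr. lra. }
  assert (Ps : P s).
  { destruct (Req_dec s t0) as [->|Hne]; [exact H0|]. apply Hlim; [lra | exact Hbefore]. }
  assert (Hst : s < t1) by (destruct (Req_dec s t1) as [->|]; [contradiction | lra]).
  destruct (Hstep s Hs0 Ps) as [d [Hd HP]].
  set (r := Rmin (s + d / 2) t1).
  assert (Hr1 : r <= s + d / 2) by apply Rmin_l.
  assert (Hr2 : s < r) by (apply Rmin_glb_lt; lra).
  assert (E r); [|assert (r <= s) by (apply Hub; assumption); lra].
  split; [split; [lra | apply Rmin_r]|].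
  intros q Hq. destruct (Rlt_dec q s); [apply Hbefore | apply HP]; lra.
Qed.

Lemma barrier_step (y : R -> R) s l U : is_derive y s l -> y s <= U ->
  (y s = U -> l < 0) -> exists e, 0 < e /\ forall r, s <= r < s + e -> y r <= U.
Proof.
  intros Hd Hs Hneg. destruct (Req_dec (y s) U) as [Heq|Hne].
  - destruct (is_derive_lt_right y s l Hd (Hneg Heq)) as [e [He Hlt]].
    exists e. split; [exact He|]. intros r Hr.
    destruct (Req_dec r s) as [->|]; [lra|]. specialize (Hlt r ltac:(lra)). lra.
  - destruct (continuity_pt_ball y s (U - y s) (is_derive_continuity_pt y s l Hd))
      as [e [He Hball]]; [lra|].
    exists e. split; [exact He|]. intros r Hr.
    assert (Hyr : Rabs (y r - y s) < U - y s) by (apply Hball; rewrite Rabs_right; lra).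
    apply Rabs_def2 in Hyr. lra.
Qed.

Lemma le_of_le_before (y : R -> R) t0 s U : t0 < s -> continuity_pt y s ->
  (forall r, t0 <= r < s -> y r <= U) -> y s <= U.
Proof.
  intros Hts Hc Hb. apply Rnot_lt_le. intros Hlt.
  destruct (continuity_pt_ball y s (y s - U) Hc) as [e [He Hball]]; [lra|].
  set (r := Rmax t0 (s - e / 2)).
  assert (Hr : t0 <= r < s) by (split; [apply Rmax_l | apply Rmax_lub_lt; lra]).
  assert (Hyr : Rabs (y r - y s) < y s - U).
  { apply Hball. assert (s - e / 2 <= r) by apply Rmax_r. rewrite Rabs_left; lra. }
  apply Rabs_def2 in Hyr. specialize (Hb r Hr). lra.
Qed.

Lemma barrier2 (y1 y2 g1 g2 : R -> R) t0 U1 U2 :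
  (forall t, t0 <= t -> is_derive y1 t (g1 t) /\ is_derive y2 t (g2 t)) ->
  (forall t, t0 <= t -> y1 t = U1 -> y2 t <= U2 -> g1 t < 0) ->
  (forall t, t0 <= t -> y2 t = U2 -> y1 t <= U1 -> g2 t < 0) ->
  y1 t0 <= U1 -> y2 t0 <= U2 -> forall t, t0 <= t -> y1 t <= U1 /\ y2 t <= U2.
Proof.
  intros Hd H1 H2 I1 I2.
  apply (real_induction (fun t => y1 t <= U1 /\ y2 t <= U2)); [split; assumption | |].
  - intros s Hs [P1 P2]. destruct (Hd s Hs) as [D1 D2].
    destruct (barrier_step y1 s (g1 s) U1 D1 P1) as [e1 [He1 E1]]; [intros; apply H1; auto|].
    destruct (barrier_step y2 s (g2 s) U2 D2 P2) as [e2 [He2 E2]]; [intros; apply H2; auto|].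
    exists (Rmin e1 e2). split; [apply Rmin_glb_lt; assumption|].
    assert (Rmin e1 e2 <= e1) by apply Rmin_l. assert (Rmin e1 e2 <= e2) by apply Rmin_r.
    intros r Hr. split; [apply E1 | apply E2]; lra.
  - intros s Hs Hbefore. destruct (Hd s (Rlt_le _ _ Hs)) as [D1 D2].
    split; apply (le_of_le_before _ t0 s); try assumption.
    + exact (is_derive_continuity_pt _ _ _ D1).
    + intros r Hr. apply Hbefore, Hr.
    + exact (is_derive_continuity_pt _ _ _ D2).
    + intros r Hr. apply Hbefore, Hr.
Qed.

Lemma barrier1 (y g : R -> R) t0 U :
  (forall t, t0 <= t -> is_derive y t (g t)) ->
  (forall t, t0 <= t -> y t = U -> g t < 0) ->
  y t0 <= U -> forall t, t0 <= t -> y t <= U.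
Proof.
  intros Hd Hg I t Ht.
  refine (proj1 (barrier2 y (fun _ => 0) g (fun _ => 0) t0 U 1 _ _ _ I Rle_0_1 t Ht)).
  - intros s Hs. split; [apply Hd, Hs | apply (is_derive_const 0)].
  - intros s Hs HU _. apply Hg; assumption.
  - intros s _ H10 _. exfalso. lra.
Qed.

Lemma eventually_below_of_drift (y g : R -> R) T lo hi a mu :
  0 < mu -> (forall t, T <= t -> is_derive y t (g t)) -> (forall t, T <= t -> lo <= y t <= hi) ->
  (forall t, T <= t -> a <= y t -> g t <= - mu) ->
  exists T', T <= T' /\ forall t, T' <= t -> y t <= a.
Proof.
  intros Hmu Hd Hb Hg.
  assert (Hlh : lo <= hi) by (destruct (Hb T); lra).
  set (K := (hi - lo) / mu + 1).
  assert (HK : mu * K = hi - lo + mu) by (unfold K; field; lra).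
  assert (HK0 : 0 < K) by (unfold K; assert (0 <= (hi - lo) / mu) by (apply Rdiv_le_0_compat; lra); lra).
  destruct (classic (exists t1, T <= t1 <= T + K /\ y t1 <= a)) as [[t1 [Ht1 Hy1]]|Hnever].
  - exists t1. split; [lra|]. apply (barrier1 y g t1 a); [| |exact Hy1].
    + intros s Hs. apply Hd. lra.
    + intros s Hs Heq. assert (g s <= - mu) by (apply Hg; lra). lra.
  - exfalso.
    assert (Habove : forall t, T <= t <= T + K -> a < y t).
    { intros t Ht. apply Rnot_le_lt. intros Hle. apply Hnever. exists t. auto. }
    destruct (MVT_gen y T (T + K) g) as [c [Hc Hmvt]].
    + intros t Ht. rewrite Rmin_left in Ht by lra. apply Hd. lra.
    + intros t Ht. rewrite Rmin_left, Rmax_right in Ht by lra.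
      apply (is_derive_continuity_pt y t (g t)), Hd. lra.
    + rewrite Rmin_left, Rmax_right in Hc by lra.
      assert (g c <= - mu) by (apply Hg; [lra | left; apply Habove; lra]).
      replace (T + K - T) with K in Hmvt by ring.
      assert (g c * K <= - mu * K) by (apply Rmult_le_compat_r; lra).
      destruct (Hb T) as [_ HT]; [lra|]. destruct (Hb (T + K)) as [HTK _]; [lra|].
      lra.
Qed.

Lemma is_derive_const_minus (y : R -> R) t l c :
  is_derive y t l -> is_derive (fun s => c - y s) t (- l).
Proof.
  intros H. apply is_derive_Reals. replace (- l) with (0 - l) by ring.
  apply derivable_pt_lim_minus; [apply derivable_pt_lim_const | apply is_derive_Reals, H].
Qed.

Lemma right_continuous_between (y : R -> R) a b : filterlim y (at_right 0) (locally (y 0)) ->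
  a < y 0 < b -> exists d, 0 < d /\ forall t, 0 < t < d -> a < y t < b.
Proof.
  intros Hy Hab.
  pose proof (Rmin_l (y 0 - a) (b - y 0)). pose proof (Rmin_r (y 0 - a) (b - y 0)).
  set (e := Rmin (y 0 - a) (b - y 0)) in *.
  assert (He : 0 < e) by (apply Rmin_glb_lt; lra).
  destruct (Hy _ (locally_ball (y 0) (mkposreal e He))) as [d Hd].
  exists d. split; [apply cond_pos|]. intros t Ht.
  assert (Hball : Rabs (y t - y 0) < e).
  { apply (Hd t); [|lra]. unfold ball; simpl; unfold AbsRing_ball, abs, minus, plus, opp; simpl.
    rewrite Rabs_right; lra. }
  apply Rabs_def2 in Hball. lra.
Qed.

Definition continuous_on_interval (a b : R) (g : R -> R) : Prop :=
  forall y, a <= y <= b -> forall eps, 0 < eps -> exists d, 0 < d /\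
    forall z, a <= z <= b -> Rabs (z - y) < d -> Rabs (g z - g y) < eps.

Lemma continuous_on_interval_restrict a b a' b' g : a <= a' -> b' <= b ->
  continuous_on_interval a b g -> continuous_on_interval a' b' g.
Proof.
  intros Ha Hb Hg y Hy eps He. destruct (Hg y ltac:(lra) eps He) as [d [Hd Hz]].
  exists d. split; [exact Hd|]. intros z Hz' Hzy. apply Hz; [lra | exact Hzy].
Qed.

Lemma continuous_on_interval_comp a b a' b' g k :
  continuous_on_interval a b g -> (forall y, a <= y <= b -> a' <= g y <= b') ->
  continuous_on_interval a' b' k -> continuous_on_interval a b (fun y => k (g y)).
Proof.
  intros Hg Hrange Hk y Hy eps He.
  destruct (Hk (g y) (Hrange y Hy) eps He) as [dk [Hdk Hkz]].
  destruct (Hg y Hy dk Hdk) as [d [Hd Hgz]].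
  exists d. split; [exact Hd|]. intros z Hz Hzy. apply Hkz; [apply Hrange, Hz | apply Hgz; assumption].
Qed.

Lemma continuous_on_interval_of_is_derive a b (g : R -> R) :
  (forall y, a <= y <= b -> ex_derive g y) -> continuous_on_interval a b g.
Proof.
  intros Hd y Hy eps He. destruct (Hd y Hy) as [l Hl].
  destruct (continuity_pt_ball g y eps (is_derive_continuity_pt g y l Hl) He) as [d [Hdpos Hball]].
  exists d. split; [exact Hdpos|]. intros z _ Hz. apply Hball, Hz.
Qed.

(* Clamping to [[a, b]] extends [g] to a function continuous on all of [R]. *)
Lemma ivt_interval a b g : a <= b -> continuous_on_interval a b g ->
  0 <= g a -> g b <= 0 -> exists z, a <= z <= b /\ g z = 0.
Proof.
  intros Hab Hg Ha Hb.
  set (clamp := fun y => Rmax a (Rmin b y)).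
  assert (Hclamp_in : forall y, a <= clamp y <= b).
  { intros y. unfold clamp. split; [apply Rmax_l | apply Rmax_lub; [exact Hab | apply Rmin_l]]. }
  assert (Hclamp_id : forall y, a <= y <= b -> clamp y = y).
  { intros y Hy. unfold clamp. rewrite Rmin_right, Rmax_right; lra. }
  assert (Hclamp_lip : forall y z, Rabs (clamp z - clamp y) <= Rabs (z - y)).
  { intros y z. unfold clamp, Rmax, Rmin.
    repeat destruct Rle_dec; unfold Rabs; repeat destruct Rcase_abs; lra. }
  set (k := fun y => g (clamp y)).
  assert (Hk : continuity k).
  { intros y eps He. destruct (Hg (clamp y) (Hclamp_in y) eps He) as [d [Hd Hz]].
    exists d. split; [exact Hd|]. intros z [_ Hzy]. apply Hz; [apply Hclamp_in|].
    eapply Rle_lt_trans; [apply Hclamp_lip | exact Hzy]. }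
  destruct (IVT_gen k a b 0 Hk) as [z [Hz Hkz]].
  { unfold k. rewrite !Hclamp_id by lra. split.
    - eapply Rle_trans; [apply Rmin_r | exact Hb].
    - eapply Rle_trans; [exact Ha | apply Rmax_l]. }
  rewrite Rmin_left, Rmax_right in Hz by exact Hab.
  exists z. split; [exact Hz|]. unfold k in Hkz. rewrite Hclamp_id in Hkz by exact Hz. exact Hkz.
Qed.

Lemma ivt_fixpoint a b G : a <= b -> continuous_on_interval a b G ->
  a <= G a -> G b <= b -> exists z, a <= z <= b /\ G z = z.
Proof.
  intros Hab HG Ha Hb.
  destruct (ivt_interval a b (fun y => G y - y)) as [z [Hz Hfix]]; [exact Hab| | lra | lra |].
  - intros y Hy eps He. destruct (HG y Hy (eps / 2)) as [d [Hd Hz]]; [lra|].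
    exists (Rmin d (eps / 2)). split; [apply Rmin_glb_lt; lra|].
    intros z Hz' Hzy. assert (Rmin d (eps / 2) <= d) by apply Rmin_l.
    assert (Rmin d (eps / 2) <= eps / 2) by apply Rmin_r.
    specialize (Hz z Hz' ltac:(lra)). apply Rabs_def2 in Hz. apply Rabs_def2 in Hzy.
    apply Rabs_def1; lra.
  - exists z. split; [exact Hz | lra].
Qed.

Lemma iterates_cvg_fixpoint (G : R -> R) p b : p <= b -> continuous_on_interval p b G ->
  G p = p -> (forall y, p < y <= b -> p <= G y < y) ->
  is_lim_seq (fun n => Nat.iter n G b) p.
Proof.
  intros Hpb HG Hfix Hdecr.
  assert (Hstep : forall y, p <= y <= b -> p <= G y <= y).
  { intros y Hy. destruct (Req_dec y p) as [->|Hne]; [rewrite Hfix; lra|].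
    specialize (Hdecr y ltac:(lra)). lra. }
  set (u := fun n => Nat.iter n G b).
  assert (Hu : forall n, p <= u n <= b /\ u (S n) <= u n).
  { unfold u. induction n as [|n [IHn _]]; simpl in *.
    - pose proof (Hstep b ltac:(lra)). lra.
    - pose proof (Hstep _ IHn). pose proof (Hstep (G (Nat.iter n G b)) ltac:(lra)). lra. }
  destruct (ex_finite_lim_seq_decr u p (fun n => proj2 (Hu n)) (fun n => proj1 (proj1 (Hu n))))
    as [l Hl].
  assert (Hlb : p <= l <= b).
  { split.
    - apply (is_lim_seq_le (fun _ => p) u p l); [apply Hu | apply is_lim_seq_const | exact Hl].
    - apply (is_lim_seq_le u (fun _ => b) l b); [apply Hu | exact Hl | apply is_lim_seq_const]. }
  assert (HGl : is_lim_seq (fun n => u (S n)) (G l)).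
  { apply is_lim_seq_spec. intros eps. destruct (HG l Hlb eps (cond_pos eps)) as [d [Hd Hz]].
    apply is_lim_seq_spec in Hl. destruct (Hl (mkposreal d Hd)) as [N HN].
    exists N. intros n Hn. apply Hz; [apply Hu | apply HN, Hn]. }
  assert (HlS : is_lim_seq (fun n => u (S n)) l) by (apply -> is_lim_seq_incr_1; exact Hl).
  assert (Hl_fix : G l = l).
  { apply is_lim_seq_unique in HGl. apply is_lim_seq_unique in HlS.
    rewrite HGl in HlS. injection HlS. auto. }
  replace p with l; [exact Hl|].
  destruct (Req_dec l p) as [|Hne]; [assumption|]. specialize (Hdecr l ltac:(lra)). lra.
Qed.

(* [g] need only be differentiable on the image of [tau0]; the intermediate value theorem
   for [tau0] shows that this image contains the whole interval between two of its values. *)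
Lemma comp_strictly_increasing (g tau0 : R -> R) B :
  (forall z, 0 <= z <= B -> ex_derive tau0 z) ->
  (forall a b, 0 <= a <= B -> 0 <= b <= B -> a < b -> tau0 a < tau0 b) ->
  (forall z, 0 <= z <= B -> exists d, 0 < d /\ is_derive g (tau0 z) d) ->
  forall u w, 0 <= u -> u < w -> w <= B -> g (tau0 u) < g (tau0 w).
Proof.
  intros Htau Hincr Hg u w Hu Huw Hw.
  assert (Hpq : tau0 u < tau0 w) by (apply Hincr; lra).
  assert (Hder : forall s, tau0 u <= s <= tau0 w -> exists d, 0 < d /\ is_derive g s d).
  { intros s Hs.
    destruct (ivt_interval u w (fun z => s - tau0 z)) as [z [Hz Hzs]]; [lra| | lra | lra |].
    - intros y Hy eps He.
      destruct (continuous_on_interval_of_is_derive u w tau0 ltac:(intros; apply Htau; lra) y Hy eps He)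
        as [d [Hd Hnear]].
      exists d. split; [exact Hd|]. intros z Hz Hzy.
      replace (s - tau0 z - (s - tau0 y)) with (- (tau0 z - tau0 y)) by ring.
      rewrite Rabs_Ropp. apply Hnear; assumption.
    - replace s with (tau0 z) by lra. apply Hg. lra. }
  destruct (MVT_gen g (tau0 u) (tau0 w) (Derive g)) as [c [Hc Hmvt]].
  - intros s Hs. rewrite Rmin_left, Rmax_right in Hs by lra.
    destruct (Hder s ltac:(lra)) as [d [_ Hd]]. rewrite (is_derive_unique g s d Hd). exact Hd.
  - intros s Hs. rewrite Rmin_left, Rmax_right in Hs by lra.
    destruct (Hder s Hs) as [d [_ Hd]]. exact (is_derive_continuity_pt g s d Hd).
  - rewrite Rmin_left, Rmax_right in Hc by lra.
    destruct (Hder c Hc) as [d [Hd Hcd]]. rewrite (is_derive_unique g c d Hcd) in Hmvt.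
    assert (0 < d * (tau0 w - tau0 u)) by (apply Rmult_lt_0_compat; lra). lra.
Qed.

Lemma lipschitz_lt K e x : 0 <= K -> 0 < e -> Rabs x < e / (K + 1) -> K * Rabs x < e.
Proof.
  intros HK He Hx. assert (Hq : e = e / (K + 1) * (K + 1)) by (field; lra).
  assert (0 <= Rabs x) by apply Rabs_pos. assert (0 < e / (K + 1)) by (apply Rdiv_lt_0_compat; lra).
  nra.
Qed.

Lemma Rmin_lt_compat p q p' q' : p < p' -> q < q' -> Rmin p q < Rmin p' q'.
Proof.
  intros Hp Hq. apply Rmin_glb_lt; [eapply Rle_lt_trans; [apply Rmin_l | exact Hp]
                                  | eapply Rle_lt_trans; [apply Rmin_r | exact Hq]].
Qed.

Lemma Rmin_minus_distr p q r : Rmin p q - r = Rmin (p - r) (q - r).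
Proof. unfold Rmin. repeat destruct Rle_dec; lra. Qed.

Lemma Rmin_lipschitz p q p' q' : Rabs (Rmin p q - Rmin p' q') <= Rabs (p - p') + Rabs (q - q').
Proof. unfold Rmin. repeat destruct Rle_dec; unfold Rabs; repeat destruct Rcase_abs; lra. Qed.

Lemma Rmin_minus_lipschitz p q r p' q' r' :
  Rabs (Rmin p' q' - r' - (Rmin p q - r)) <= Rabs (p' - p) + Rabs (q' - q) + Rabs (r' - r).
Proof. unfold Rmin. repeat destruct Rle_dec; unfold Rabs; repeat destruct Rcase_abs; lra. Qed.

Lemma dist2_lt_of_lt (a b : R * R) e :
  Rabs (fst a - fst b) < e / 2 -> Rabs (snd a - snd b) < e / 2 -> dist2 a b < e.
Proof.
  intros H1 H2. unfold dist2.
  assert (He : 0 < e) by (pose proof (Rabs_pos (fst a - fst b)); lra).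
  rewrite <- (sqrt_pow2 e) by lra. apply sqrt_lt_1_alt. split.
  - pose proof (pow2_ge_0 (fst a - fst b)). pose proof (pow2_ge_0 (snd a - snd b)). lra.
  - rewrite <- (pow2_abs (fst a - fst b)), <- (pow2_abs (snd a - snd b)).
    pose proof (Rabs_pos (fst a - fst b)). pose proof (Rabs_pos (snd a - snd b)). nra.
Qed.

Lemma Rabs_fst_le_dist2 (a b : R * R) : Rabs (fst a - fst b) <= dist2 a b.
Proof.
  unfold dist2. rewrite <- (sqrt_pow2 (Rabs (fst a - fst b))) by apply Rabs_pos.
  apply sqrt_le_1_alt. rewrite pow2_abs. pose proof (pow2_ge_0 (snd a - snd b)). lra.
Qed.

Lemma Rabs_snd_le_dist2 (a b : R * R) : Rabs (snd a - snd b) <= dist2 a b.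
Proof.
  unfold dist2. rewrite <- (sqrt_pow2 (Rabs (snd a - snd b))) by apply Rabs_pos.
  apply sqrt_le_1_alt. rewrite pow2_abs. pose proof (pow2_ge_0 (fst a - fst b)). lra.
Qed.

Lemma dist2_le_abs_sum (a b : R * R) : dist2 a b <= Rabs (fst a - fst b) + Rabs (snd a - snd b).
Proof.
  unfold dist2. pose proof (Rabs_pos (fst a - fst b)). pose proof (Rabs_pos (snd a - snd b)).
  rewrite <- (sqrt_pow2 (Rabs (fst a - fst b) + Rabs (snd a - snd b))) by lra.
  apply sqrt_le_1_alt. rewrite <- (pow2_abs (fst a - fst b)), <- (pow2_abs (snd a - snd b)). nra.
Qed.

(** * Nullclines of a cooperative rate *)

Record cooperative_rate (B B' : R) (f : R * R -> R) : Prop := {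
  rate_bound_pos : 0 < B;
  rate_decr : forall a b c, 0 <= a -> a < b -> b <= B -> 0 <= c <= B' -> f (b, c) < f (a, c);
  rate_incr : forall a c d, 0 <= a <= B -> 0 <= c -> c <= d -> d <= B' -> f (a, c) <= f (a, d);
  rate_at_0 : forall c, 0 <= c <= B' -> 0 <= f (0, c);
  rate_at_B : forall c, 0 <= c <= B' -> f (B, c) <= 0;
  rate_lipschitz : exists K, 0 <= K /\ forall a c a' c',
    0 <= a <= B -> 0 <= c <= B' -> 0 <= a' <= B -> 0 <= c' <= B' ->
    Rabs (f (a', c') - f (a, c)) <= K * (Rabs (a' - a) + Rabs (c' - c))
}.

Definition nullcline (B : R) (f : R * R -> R) (c : R) : R :=
  epsilon (inhabits 0) (fun a => 0 <= a <= B /\ f (a, c) = 0).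

Definition eventually_le (y : R -> R) (c : R) : Prop :=
  forall eps, 0 < eps -> exists T, 0 < T /\ forall t, T <= t -> y t <= c + eps.

Lemma eventually_near (y : R -> R) c B :
  eventually_le y c -> eventually_le (fun t => B - y t) (B - c) ->
  forall eps, 0 < eps -> exists T, forall t, T <= t -> Rabs (y t - c) < eps.
Proof.
  intros Hup Hlow eps He.
  destruct (Hup (eps / 2)) as [T1 [_ H1]]; [lra|]. destruct (Hlow (eps / 2)) as [T2 [_ H2]]; [lra|].
  exists (Rmax T1 T2). intros t Ht.
  specialize (H1 t (Rle_trans _ _ _ (Rmax_l T1 T2) Ht)).
  specialize (H2 t (Rle_trans _ _ _ (Rmax_r T1 T2) Ht)).
  apply Rabs_def1; lra.
Qed.

Section Nullcline.
Variables (B B' : R) (f : R * R -> R).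
Hypothesis Hf : cooperative_rate B B' f.
Local Notation h := (nullcline B f).

Lemma rate_nonincr a b c : 0 <= a -> a <= b -> b <= B -> 0 <= c <= B' -> f (b, c) <= f (a, c).
Proof.
  intros Ha [Hab|<-] Hb Hc; [left; apply (rate_decr _ _ _ Hf); assumption | apply Rle_refl].
Qed.

Lemma rate_continuous_own c : 0 <= c <= B' -> continuous_on_interval 0 B (fun a => f (a, c)).
Proof.
  intros Hc a Ha eps He. destruct (rate_lipschitz _ _ _ Hf) as [K [HK HL]].
  exists (eps / (K + 1)). split; [apply Rdiv_lt_0_compat; lra|]. intros a' Ha' Hd.
  eapply Rle_lt_trans; [apply HL; assumption|].
  rewrite Rminus_eq_0, Rabs_R0, Rplus_0_r. apply lipschitz_lt; assumption.
Qed.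

Lemma rate_continuous_other a : 0 <= a <= B -> continuous_on_interval 0 B' (fun c => f (a, c)).
Proof.
  intros Ha c Hc eps He. destruct (rate_lipschitz _ _ _ Hf) as [K [HK HL]].
  exists (eps / (K + 1)). split; [apply Rdiv_lt_0_compat; lra|]. intros c' Hc' Hd.
  eapply Rle_lt_trans; [apply HL; assumption|].
  rewrite Rminus_eq_0, Rabs_R0, Rplus_0_l. apply lipschitz_lt; assumption.
Qed.

Lemma nullcline_spec c : 0 <= c <= B' -> 0 <= h c <= B /\ f (h c, c) = 0.
Proof.
  intros Hc. apply (epsilon_spec (inhabits 0) (fun a => 0 <= a <= B /\ f (a, c) = 0)).
  destruct (ivt_interval 0 B (fun a => f (a, c))) as [a Ha].
  - apply Rlt_le, (rate_bound_pos _ _ _ Hf).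
  - apply rate_continuous_own, Hc.
  - apply (rate_at_0 _ _ _ Hf), Hc.
  - apply (rate_at_B _ _ _ Hf), Hc.
  - exists a. exact Ha.
Qed.

Lemma rate_pos_below c a : 0 <= c <= B' -> 0 <= a -> a < h c -> 0 < f (a, c).
Proof.
  intros Hc Ha Hlt. destruct (nullcline_spec c Hc) as [Hh Hzero].
  rewrite <- Hzero. apply (rate_decr _ _ _ Hf); lra.
Qed.

Lemma rate_neg_above c a : 0 <= c <= B' -> h c < a -> a <= B -> f (a, c) < 0.
Proof.
  intros Hc Hlt Ha. destruct (nullcline_spec c Hc) as [Hh Hzero].
  rewrite <- Hzero. apply (rate_decr _ _ _ Hf); lra.
Qed.

Lemma lt_nullcline_of_pos c a : 0 <= c <= B' -> 0 <= a <= B -> 0 < f (a, c) -> a < h c.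
Proof.
  intros Hc Ha Hpos. destruct (nullcline_spec c Hc) as [_ Hzero].
  destruct (Rtotal_order a (h c)) as [|[Heq|Hgt]]; [assumption | |].
  - rewrite Heq in Hpos. lra.
  - pose proof (rate_neg_above c a Hc Hgt (proj2 Ha)). lra.
Qed.

Lemma nullcline_lt_of_neg c a : 0 <= c <= B' -> 0 <= a <= B -> f (a, c) < 0 -> h c < a.
Proof.
  intros Hc Ha Hneg. destruct (nullcline_spec c Hc) as [_ Hzero].
  destruct (Rtotal_order a (h c)) as [Hlt|[Heq|]]; [| |assumption].
  - pose proof (rate_pos_below c a Hc (proj1 Ha) Hlt). lra.
  - rewrite Heq in Hneg. lra.
Qed.

Lemma nullcline_unique c a : 0 <= c <= B' -> 0 <= a <= B -> f (a, c) = 0 -> a = h c.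
Proof.
  intros Hc Ha Hzero. destruct (Rtotal_order a (h c)) as [Hlt|[|Hgt]]; [| assumption |].
  - pose proof (rate_pos_below c a Hc (proj1 Ha) Hlt). lra.
  - pose proof (rate_neg_above c a Hc Hgt (proj2 Ha)). lra.
Qed.

Lemma nullcline_mono c d : 0 <= c -> c <= d -> d <= B' -> h c <= h d.
Proof.
  intros Hc Hcd Hd. apply Rnot_lt_le. intros Hlt.
  destruct (nullcline_spec c) as [Hhc Hzero]; [lra|].
  assert (f (h c, d) < 0) by (apply rate_neg_above; lra).
  assert (f (h c, c) <= f (h c, d)) by (apply (rate_incr _ _ _ Hf); lra).
  lra.
Qed.

Lemma nullcline_continuous : continuous_on_interval 0 B' h.
Proof.
  intros c Hc eps He. destruct (nullcline_spec c Hc) as [Hhc _].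
  assert (Hup : exists d, 0 < d /\ forall c', 0 <= c' <= B' -> Rabs (c' - c) < d -> h c' < h c + eps).
  { destruct (Rle_dec (h c + eps / 2) B) as [HB|HB].
    - assert (Hneg : f (h c + eps / 2, c) < 0) by (apply rate_neg_above; lra).
      destruct (rate_continuous_other (h c + eps / 2) ltac:(lra) c Hc (- f (h c + eps / 2, c)))
        as [d [Hd Hnear]]; [lra|].
      exists d. split; [exact Hd|]. intros c' Hc' Hcd.
      specialize (Hnear c' Hc' Hcd). apply Rabs_def2 in Hnear.
      assert (h c' < h c + eps / 2) by (apply nullcline_lt_of_neg; lra). lra.
    - exists 1. split; [lra|]. intros c' Hc' _. destruct (nullcline_spec c' Hc'). lra. }
  assert (Hlow : exists d, 0 < d /\ forall c', 0 <= c' <= B' -> Rabs (c' - c) < d -> h c - eps < h c').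
  { destruct (Rle_dec 0 (h c - eps / 2)) as [H0|H0].
    - assert (Hpos : 0 < f (h c - eps / 2, c)) by (apply rate_pos_below; lra).
      destruct (rate_continuous_other (h c - eps / 2) ltac:(lra) c Hc (f (h c - eps / 2, c)))
        as [d [Hd Hnear]]; [lra|].
      exists d. split; [exact Hd|]. intros c' Hc' Hcd.
      specialize (Hnear c' Hc' Hcd). apply Rabs_def2 in Hnear.
      assert (h c - eps / 2 < h c') by (apply lt_nullcline_of_pos; lra). lra.
    - exists 1. split; [lra|]. intros c' Hc' _. destruct (nullcline_spec c' Hc'). lra. }
  destruct Hup as [d1 [Hd1 Hup]]. destruct Hlow as [d2 [Hd2 Hlow]].
  exists (Rmin d1 d2). split; [apply Rmin_glb_lt; assumption|]. intros c' Hc' Hcd.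
  assert (Rmin d1 d2 <= d1) by apply Rmin_l. assert (Rmin d1 d2 <= d2) by apply Rmin_r.
  specialize (Hup c' Hc' ltac:(lra)). specialize (Hlow c' Hc' ltac:(lra)).
  apply Rabs_def1; lra.
Qed.

(* Above [h c + eps] the rate is bounded away from zero once [z] is close to [c]. *)
Lemma eventually_le_nullcline (y z : R -> R) c :
  (forall t, 0 <= t -> 0 <= y t <= B /\ 0 <= z t <= B') ->
  (forall t, 0 < t -> is_derive y t (f (y t, z t))) ->
  0 <= c <= B' -> eventually_le z c -> eventually_le y (h c).
Proof.
  intros Hbox Hder Hc Hz eps He.
  destruct (nullcline_continuous c Hc (eps / 2)) as [del [Hdel Hcont]]; [lra|].
  destruct (Hz (del / 2)) as [T1 [HT1 Hz1]]; [lra|].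
  set (d := Rmin (c + del / 2) B').
  assert (Hd1 : d <= c + del / 2) by apply Rmin_l.
  assert (Hd2 : c <= d <= B') by (split; [apply Rmin_glb | apply Rmin_r]; lra).
  assert (Hhd : h d < h c + eps / 2).
  { assert (Habs : Rabs (h d - h c) < eps / 2) by (apply Hcont; [lra | rewrite Rabs_right; lra]).
    apply Rabs_def2 in Habs. lra. }
  assert (Hzd : forall t, T1 <= t -> z t <= d).
  { intros t Ht. apply Rmin_glb; [apply Hz1, Ht | apply (Hbox t); lra]. }
  destruct (nullcline_spec d ltac:(lra)) as [Hhd_range _].
  remember (h d + eps / 2) as a eqn:Ha.
  destruct (Rle_dec B a) as [HBa|HBa].
  - exists T1. split; [exact HT1|]. intros t Ht. destruct (Hbox t) as [[_ ?] _]; lra.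
  - assert (Hfa : f (a, d) < 0) by (apply rate_neg_above; lra).
    destruct (eventually_below_of_drift y (fun t => f (y t, z t)) T1 0 B a (- f (a, d)))
      as [T' [HT' Hbelow]].
    + lra.
    + intros t Ht. apply Hder. lra.
    + intros t Ht. apply (Hbox t). lra.
    + intros t Ht Hat. destruct (Hbox t) as [Hy Hz']; [lra|].
      assert (f (y t, z t) <= f (y t, d)) by (apply (rate_incr _ _ _ Hf); [exact Hy | lra | apply Hzd; lra | lra]).
      assert (f (y t, d) <= f (a, d)) by (apply rate_nonincr; lra).
      lra.
    + exists T'. split; [lra|]. intros t Ht. specialize (Hbelow t Ht). lra.
Qed.

End Nullcline.

(** * Planar cooperative systems *)

Definition box (B1 B2 : R) (x : R * R) : Prop := 0 <= fst x <= B1 /\ 0 <= snd x <= B2.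

Definition swap (x : R * R) : R * R := (snd x, fst x).

(* Both rates are written as functions of (own density, other density). *)
Definition cooperative_system (B1 B2 : R) (f1 f2 : R * R -> R) : Prop :=
  cooperative_rate B1 B2 f1 /\ cooperative_rate B2 B1 (fun y => f2 (swap y)).

Definition equilibrium (B1 B2 : R) (f1 f2 : R * R -> R) (x : R * R) : Prop :=
  box B1 B2 x /\ f1 x = 0 /\ f2 x = 0.

Definition flow (B1 B2 : R) (f1 f2 : R * R -> R) (x : R -> R * R) : Prop :=
  (forall t, 0 <= t -> box B1 B2 (x t)) /\
  (forall t, 0 < t ->
     is_derive (fun s => fst (x s)) t (f1 (x t)) /\ is_derive (fun s => snd (x s)) t (f2 (x t))).

Definition inward_on_upper_faces (B1 B2 : R) (f1 f2 : R * R -> R) (U : R * R) : Prop :=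
  (forall y, box B1 B2 y -> fst y = fst U -> snd y <= snd U -> f1 y < 0) /\
  (forall y, box B1 B2 y -> snd y = snd U -> fst y <= fst U -> f2 y < 0).

Lemma flow_stays_below B1 B2 f1 f2 x U t0 :
  flow B1 B2 f1 f2 x -> inward_on_upper_faces B1 B2 f1 f2 U -> 0 < t0 ->
  fst (x t0) <= fst U -> snd (x t0) <= snd U ->
  forall t, t0 <= t -> fst (x t) <= fst U /\ snd (x t) <= snd U.
Proof.
  intros [Hbox Hder] [Hface1 Hface2] Ht0.
  apply (barrier2 (fun t => fst (x t)) (fun t => snd (x t)) (fun t => f1 (x t)) (fun t => f2 (x t))).
  - intros t Ht. apply Hder. lra.
  - intros t Ht. apply Hface1, Hbox. lra.
  - intros t Ht. apply Hface2, Hbox. lra.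
Qed.

Section CooperativeSystem.
Variables (B1 B2 : R) (f1 f2 : R * R -> R).
Hypothesis Hf : cooperative_system B1 B2 f1 f2.
Local Notation h1 := (nullcline B1 f1).
Local Notation h2 := (nullcline B2 (fun y => f2 (swap y))).

Lemma nullcline2_spec c : 0 <= c <= B1 -> 0 <= h2 c <= B2 /\ f2 (c, h2 c) = 0.
Proof. exact (nullcline_spec _ _ _ (proj2 Hf) c). Qed.

Lemma equilibrium_on_nullclines x :
  equilibrium B1 B2 f1 f2 x -> fst x = h1 (snd x) /\ snd x = h2 (fst x).
Proof.
  destruct x as [x1 x2]. intros [[Hx1 Hx2] [E1 E2]].
  split; [apply (nullcline_unique _ _ _ (proj1 Hf)) | apply (nullcline_unique _ _ _ (proj2 Hf))];
    assumption.
Qed.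

Lemma equilibrium_of_fixpoint y : 0 <= y <= B1 -> h1 (h2 y) = y -> equilibrium B1 B2 f1 f2 (y, h2 y).
Proof.
  intros Hy Hfix. destruct (nullcline2_spec y Hy) as [Hh2 E2].
  destruct (nullcline_spec _ _ _ (proj1 Hf) (h2 y) Hh2) as [_ E1]. rewrite Hfix in E1.
  repeat split; simpl; assumption || lra.
Qed.

Lemma nullcline_comp_range y : 0 <= y <= B1 -> 0 <= h1 (h2 y) <= B1.
Proof.
  intros Hy. apply (nullcline_spec _ _ _ (proj1 Hf)), nullcline2_spec, Hy.
Qed.

Lemma nullcline_comp_continuous : continuous_on_interval 0 B1 (fun y => h1 (h2 y)).
Proof.
  apply (continuous_on_interval_comp _ _ 0 B2).
  - apply (nullcline_continuous _ _ _ (proj2 Hf)).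
  - intros y Hy. apply nullcline2_spec, Hy.
  - apply (nullcline_continuous _ _ _ (proj1 Hf)).
Qed.

Lemma equilibrium_exists : exists xb, equilibrium B1 B2 f1 f2 xb.
Proof.
  destruct (ivt_fixpoint 0 B1 (fun y => h1 (h2 y))) as [y [Hy Hfix]].
  - apply Rlt_le, (rate_bound_pos _ _ _ (proj1 Hf)).
  - apply nullcline_comp_continuous.
  - apply nullcline_comp_range. pose proof (rate_bound_pos _ _ _ (proj1 Hf)). lra.
  - apply nullcline_comp_range. pose proof (rate_bound_pos _ _ _ (proj1 Hf)). lra.
  - exists (y, h2 y). apply equilibrium_of_fixpoint; assumption.
Qed.

Lemma nullcline_iterates_range n : 0 <= Nat.iter n (fun y => h1 (h2 y)) B1 <= B1.
Proof.
  induction n as [|n IHn]; simpl.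
  - pose proof (rate_bound_pos _ _ _ (proj1 Hf)). lra.
  - apply nullcline_comp_range, IHn.
Qed.

Lemma flow_eventually_le_fst x c : flow B1 B2 f1 f2 x -> 0 <= c <= B2 ->
  eventually_le (fun t => snd (x t)) c -> eventually_le (fun t => fst (x t)) (h1 c).
Proof.
  intros [Hbox Hder] Hc. apply (eventually_le_nullcline _ _ _ (proj1 Hf)); [| |exact Hc].
  - intros t Ht. apply Hbox, Ht.
  - intros t Ht. rewrite <- surjective_pairing. apply Hder, Ht.
Qed.

Lemma flow_eventually_le_snd x c : flow B1 B2 f1 f2 x -> 0 <= c <= B1 ->
  eventually_le (fun t => fst (x t)) c -> eventually_le (fun t => snd (x t)) (h2 c).
Proof.
  intros [Hbox Hder] Hc. apply (eventually_le_nullcline _ _ _ (proj2 Hf)); [| |exact Hc].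
  - intros t Ht. split; apply Hbox, Ht.
  - intros t Ht. unfold swap; simpl. rewrite <- surjective_pairing. apply Hder, Ht.
Qed.

Lemma flow_eventually_le_iterates x n : flow B1 B2 f1 f2 x ->
  eventually_le (fun t => fst (x t)) (Nat.iter n (fun y => h1 (h2 y)) B1).
Proof.
  intros Hx. induction n as [|n IHn].
  - intros eps He. exists 1. split; [lra|]. intros t Ht.
    destruct (proj1 Hx t) as [[_ ?] _]; [lra|]. simpl. lra.
  - pose proof (nullcline_iterates_range n) as Hn. simpl.
    apply (flow_eventually_le_fst x); [exact Hx | apply nullcline2_spec, Hn|].
    apply (flow_eventually_le_snd x); assumption.
Qed.

Lemma inward_of_nullclines U1 U2 : 0 <= U1 <= B1 -> h2 U1 < U2 -> h1 (Rmin U2 B2) < U1 ->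
  inward_on_upper_faces B1 B2 f1 f2 (U1, U2).
Proof.
  intros HU1 HU2 Hh1. destruct (nullcline2_spec U1 HU1) as [Hh2 _].
  assert (Hw : 0 <= Rmin U2 B2 <= B2) by (split; [apply Rmin_glb; lra | apply Rmin_r]).
  split; intros [y1 y2] [Hy1 Hy2] Heq Hle; simpl in *.
  - subst y1. apply Rle_lt_trans with (f1 (U1, Rmin U2 B2)).
    + apply (rate_incr _ _ _ (proj1 Hf)); [exact HU1 | lra | apply Rmin_glb; lra | apply Rmin_r].
    + apply (rate_neg_above _ _ _ (proj1 Hf)); lra.
  - subst y2. apply Rle_lt_trans with (f2 (U1, U2)).
    + exact (rate_incr _ _ _ (proj2 Hf) U2 y1 U1 Hy2 (proj1 Hy1) Hle (proj2 HU1)).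
    + exact (rate_neg_above _ _ _ (proj2 Hf) U1 U2 HU1 HU2 (proj2 Hy2)).
Qed.

Variable xb : R * R.
Hypothesis Hxb : equilibrium B1 B2 f1 f2 xb.
Hypothesis Huniq : forall y, equilibrium B1 B2 f1 f2 y -> y = xb.

Lemma nullcline_comp_lt y : fst xb < y <= B1 -> h1 (h2 y) < y.
Proof.
  intros Hy. apply Rnot_le_lt. intros Hge.
  destruct Hxb as [[Hxb1 _] _].
  destruct (ivt_fixpoint y B1 (fun y => h1 (h2 y))) as [z [Hz Hfix]].
  - lra.
  - apply (continuous_on_interval_restrict 0 B1); [lra | lra | apply nullcline_comp_continuous].
  - exact Hge.
  - apply nullcline_comp_range. lra.
  - assert (Hzb : (z, h2 z) = xb) by (apply Huniq, equilibrium_of_fixpoint; [lra | exact Hfix]).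
    rewrite <- Hzb in Hy. simpl in Hy. lra.
Qed.

Lemma nullcline_iterates_cvg : is_lim_seq (fun n => Nat.iter n (fun y => h1 (h2 y)) B1) (fst xb).
Proof.
  destruct (equilibrium_on_nullclines xb Hxb) as [E1 E2].
  destruct Hxb as [[Hxb1 Hxb2] _].
  apply iterates_cvg_fixpoint; [lra | | |].
  - apply (continuous_on_interval_restrict 0 B1); [lra | lra | apply nullcline_comp_continuous].
  - rewrite <- E2. symmetry. exact E1.
  - intros y Hy. split; [|apply nullcline_comp_lt, Hy].
    rewrite E1, E2. apply (nullcline_mono _ _ _ (proj1 Hf)).
    + apply nullcline2_spec. lra.
    + apply (nullcline_mono _ _ _ (proj2 Hf)); lra.
    + apply nullcline2_spec. lra.
Qed.

Lemma flow_eventually_le x : flow B1 B2 f1 f2 x ->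
  eventually_le (fun t => fst (x t)) (fst xb) /\ eventually_le (fun t => snd (x t)) (snd xb).
Proof.
  intros Hx.
  assert (Hx1 : eventually_le (fun t => fst (x t)) (fst xb)).
  { intros eps He. pose proof nullcline_iterates_cvg as Hcvg. apply is_lim_seq_spec in Hcvg.
    destruct (Hcvg (mkposreal (eps / 2) ltac:(lra))) as [N HN].
    specialize (HN N (Nat.le_refl N)). simpl in HN. apply Rabs_def2 in HN.
    destruct (flow_eventually_le_iterates x N Hx (eps / 2)) as [T [HT Hle]]; [lra|].
    exists T. split; [exact HT|]. intros t Ht. specialize (Hle t Ht). lra. }
  split; [exact Hx1|].
  destruct (equilibrium_on_nullclines xb Hxb) as [_ E2]. destruct Hxb as [[Hxb1 _] _].
  rewrite E2. apply flow_eventually_le_snd; assumption.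
Qed.

Lemma upper_trap_box eps : 0 < eps -> fst xb < B1 -> exists U,
  fst xb < fst U < fst xb + eps /\ snd xb < snd U < snd xb + eps /\
  inward_on_upper_faces B1 B2 f1 f2 U.
Proof.
  intros He Hint.
  destruct (equilibrium_on_nullclines xb Hxb) as [_ E2]. destruct Hxb as [[Hxb1 Hxb2] _].
  destruct (nullcline_continuous _ _ _ (proj2 Hf) (fst xb) Hxb1 (eps / 2)) as [d2 [Hd2 C2]]; [lra|].
  set (s := Rmin (Rmin eps (B1 - fst xb)) d2 / 2).
  assert (Hs : 0 < s /\ s < eps /\ s < B1 - fst xb /\ s < d2).
  { unfold s. pose proof (Rmin_l (Rmin eps (B1 - fst xb)) d2). pose proof (Rmin_r (Rmin eps (B1 - fst xb)) d2).
    pose proof (Rmin_l eps (B1 - fst xb)). pose proof (Rmin_r eps (B1 - fst xb)).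
    assert (0 < Rmin (Rmin eps (B1 - fst xb)) d2) by (repeat apply Rmin_glb_lt; lra). lra. }
  clearbody s. set (U1 := fst xb + s). assert (HU1e : U1 = fst xb + s) by reflexivity. clearbody U1.
  assert (HU1 : 0 <= U1 <= B1) by lra.
  destruct (nullcline2_spec U1 HU1) as [Hh2U1 _].
  assert (Hh2_up : h2 U1 < snd xb + eps / 2).
  { assert (Habs : Rabs (h2 U1 - h2 (fst xb)) < eps / 2)
      by (apply C2; [exact HU1 | rewrite Rabs_right; lra]).
    apply Rabs_def2 in Habs. lra. }
  assert (Hh2_low : snd xb <= h2 U1) by (rewrite E2; apply (nullcline_mono _ _ _ (proj2 Hf)); lra).
  assert (HG : h1 (h2 U1) < U1) by (apply nullcline_comp_lt; lra).
  destruct (nullcline_continuous _ _ _ (proj1 Hf) (h2 U1) Hh2U1 (U1 - h1 (h2 U1))) as [d1 [Hd1 C1]]; [lra|].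
  set (eta := Rmin d1 eps / 2).
  assert (Heta : 0 < eta < d1 /\ eta <= eps / 2).
  { unfold eta. pose proof (Rmin_l d1 eps). pose proof (Rmin_r d1 eps).
    assert (0 < Rmin d1 eps) by (apply Rmin_glb_lt; lra). lra. }
  exists (U1, h2 U1 + eta). simpl. split; [lra|]. split; [lra|].
  apply inward_of_nullclines; [exact HU1 | lra |].
  set (w := Rmin (h2 U1 + eta) B2).
  assert (Hw : h2 U1 <= w <= h2 U1 + eta) by (unfold w; split; [apply Rmin_glb; lra | apply Rmin_l]).
  assert (Habs : Rabs (h1 w - h1 (h2 U1)) < U1 - h1 (h2 U1))
    by (apply C1; [split; [lra | apply Rmin_r] | rewrite Rabs_right; lra]).
  apply Rabs_def2 in Habs. lra.
Qed.

End CooperativeSystem.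

(** * The mirrored system and the lower bounds *)

Definition mirror (B1 B2 : R) (x : R * R) : R * R := (B1 - fst x, B2 - snd x).

Lemma mirror_involutive B1 B2 x : mirror B1 B2 (mirror B1 B2 x) = x.
Proof. destruct x as [x1 x2]. unfold mirror. simpl. f_equal; ring. Qed.

Lemma box_mirror B1 B2 x : box B1 B2 x -> box B1 B2 (mirror B1 B2 x).
Proof. unfold box, mirror. simpl. lra. Qed.

Lemma cooperative_rate_mirror B B' f :
  cooperative_rate B B' f -> cooperative_rate B B' (fun y => - f (mirror B B' y)).
Proof.
  intros [HB Hdecr Hincr H0 HBnd [K [HK HL]]]. unfold mirror. constructor; simpl.
  - exact HB.
  - intros a b c Ha Hab Hb Hc. apply Ropp_lt_contravar, Hdecr; lra.
  - intros a c d Ha Hc Hcd Hd. apply Ropp_le_contravar, Hincr; lra.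
  - intros c Hc. rewrite Rminus_0_r. pose proof (HBnd (B' - c) ltac:(lra)). lra.
  - intros c Hc. replace (B - B) with 0 by ring. pose proof (H0 (B' - c) ltac:(lra)). lra.
  - exists K. split; [exact HK|]. intros a c a' c' Ha Hc Ha' Hc'.
    replace (- f (B - a', B' - c') - - f (B - a, B' - c))
      with (- (f (B - a', B' - c') - f (B - a, B' - c))) by ring.
    replace (a' - a) with (- (B - a' - (B - a))) by ring.
    replace (c' - c) with (- (B' - c' - (B' - c))) by ring.
    rewrite !Rabs_Ropp. apply HL; lra.
Qed.

Lemma flow_mirror B1 B2 f1 f2 x : flow B1 B2 f1 f2 x ->
  flow B1 B2 (fun y => - f1 (mirror B1 B2 y)) (fun y => - f2 (mirror B1 B2 y))
    (fun t => mirror B1 B2 (x t)).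
Proof.
  intros [Hbox Hder]. split.
  - intros t Ht. apply box_mirror, Hbox, Ht.
  - intros t Ht. rewrite mirror_involutive. destruct (Hder t Ht) as [D1 D2].
    split; apply is_derive_const_minus; assumption.
Qed.

Definition solution (B1 B2 : R) (f1 f2 : R * R -> R) (x : R -> R * R) : Prop :=
  (forall t, 0 <= t -> box B1 B2 (x t)) /\
  filterlim (fun t => fst (x t)) (at_right 0) (locally (fst (x 0))) /\
  filterlim (fun t => snd (x t)) (at_right 0) (locally (snd (x 0))) /\
  (forall t, 0 < t ->
     is_derive (fun s => fst (x s)) t (f1 (x t)) /\ is_derive (fun s => snd (x s)) t (f2 (x t))).

Lemma flow_of_solution B1 B2 f1 f2 x : solution B1 B2 f1 f2 x -> flow B1 B2 f1 f2 x.
Proof. intros [Hbox [_ [_ Hder]]]. split; assumption. Qed.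

Lemma solution_stays_between B1 B2 f1 f2 x L U :
  solution B1 B2 f1 f2 x -> inward_on_upper_faces B1 B2 f1 f2 U ->
  inward_on_upper_faces B1 B2 (fun y => - f1 (mirror B1 B2 y)) (fun y => - f2 (mirror B1 B2 y))
    (mirror B1 B2 L) ->
  fst L < fst (x 0) < fst U -> snd L < snd (x 0) < snd U ->
  forall t, 0 <= t -> fst L <= fst (x t) <= fst U /\ snd L <= snd (x t) <= snd U.
Proof.
  intros [Hbox [Hc1 [Hc2 Hder]]] HU HL H1 H2 t Ht.
  destruct (Req_dec t 0) as [->|Htpos]; [lra|].
  destruct (right_continuous_between _ _ _ Hc1 H1) as [d1 [Hd1 C1]].
  destruct (right_continuous_between _ _ _ Hc2 H2) as [d2 [Hd2 C2]].
  set (t0 := Rmin t (Rmin d1 d2 / 2)).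
  assert (Ht0 : 0 < t0 <= t /\ t0 < d1 /\ t0 < d2).
  { unfold t0. pose proof (Rmin_l t (Rmin d1 d2 / 2)). pose proof (Rmin_r t (Rmin d1 d2 / 2)).
    pose proof (Rmin_l d1 d2). pose proof (Rmin_r d1 d2).
    assert (0 < Rmin d1 d2) by (apply Rmin_glb_lt; lra).
    assert (0 < Rmin t (Rmin d1 d2 / 2)) by (apply Rmin_glb_lt; lra). lra. }
  clearbody t0. destruct (C1 t0 ltac:(lra)), (C2 t0 ltac:(lra)).
  assert (Hx : flow B1 B2 f1 f2 x) by (split; assumption).
  destruct (flow_stays_below _ _ _ _ x U t0 Hx HU ltac:(lra) ltac:(lra) ltac:(lra) t ltac:(lra)).
  destruct (flow_stays_below _ _ _ _ _ _ t0 (flow_mirror _ _ _ _ x Hx) HL ltac:(lra))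
    with (t := t) as [HL1 HL2]; unfold mirror in *; simpl in *; lra.
Qed.

Section Mirror.
Variables (B1 B2 : R) (f1 f2 : R * R -> R) (xb : R * R).
Hypothesis Hf : cooperative_system B1 B2 f1 f2.
Hypothesis Hxb : equilibrium B1 B2 f1 f2 xb.
Hypothesis Huniq : forall y, equilibrium B1 B2 f1 f2 y -> y = xb.
Local Notation g1 := (fun y => - f1 (mirror B1 B2 y)).
Local Notation g2 := (fun y => - f2 (mirror B1 B2 y)).

Lemma mirror_cooperative : cooperative_system B1 B2 g1 g2.
Proof. split; [exact (cooperative_rate_mirror _ _ _ (proj1 Hf)) | exact (cooperative_rate_mirror _ _ _ (proj2 Hf))]. Qed.

Lemma mirror_equilibrium : equilibrium B1 B2 g1 g2 (mirror B1 B2 xb).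
Proof.
  destruct Hxb as [Hbox [E1 E2]]. split; [apply box_mirror, Hbox|].
  rewrite mirror_involutive, E1, E2. split; ring.
Qed.

Lemma mirror_equilibrium_unique y : equilibrium B1 B2 g1 g2 y -> y = mirror B1 B2 xb.
Proof.
  intros [Hbox [E1 E2]].
  assert (Hy : equilibrium B1 B2 f1 f2 (mirror B1 B2 y)).
  { split; [apply box_mirror, Hbox | split; lra]. }
  rewrite <- (Huniq _ Hy), mirror_involutive. reflexivity.
Qed.

Lemma equilibrium_attractive x : flow B1 B2 f1 f2 x ->
  forall eps, 0 < eps -> exists T, forall t, T <= t -> dist2 (x t) xb < eps.
Proof.
  intros Hx eps He.
  destruct (flow_eventually_le _ _ _ _ Hf xb Hxb Huniq x Hx) as [Hup1 Hup2].
  destruct (flow_eventually_le _ _ _ _ mirror_cooperative _ mirror_equilibrium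
              mirror_equilibrium_unique _ (flow_mirror _ _ _ _ x Hx)) as [Hlow1 Hlow2].
  destruct (eventually_near _ _ B1 Hup1 Hlow1 (eps / 2)) as [T1 H1]; [lra|].
  destruct (eventually_near _ _ B2 Hup2 Hlow2 (eps / 2)) as [T2 H2]; [lra|].
  exists (Rmax T1 T2). intros t Ht. apply dist2_lt_of_lt.
  - apply H1. eapply Rle_trans; [apply Rmax_l | exact Ht].
  - apply H2. eapply Rle_trans; [apply Rmax_r | exact Ht].
Qed.

Lemma equilibrium_stable : 0 < fst xb < B1 ->
  forall eps, 0 < eps -> exists delta, 0 < delta /\ forall x, solution B1 B2 f1 f2 x ->
    dist2 (x 0) xb < delta -> forall t, 0 <= t -> dist2 (x t) xb < eps.
Proof.
  intros Hint eps He.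
  destruct (upper_trap_box _ _ _ _ Hf xb Hxb Huniq (eps / 2) ltac:(lra) (proj2 Hint))
    as [U [HU1 [HU2 HU]]].
  destruct (upper_trap_box _ _ _ _ mirror_cooperative _ mirror_equilibrium
              mirror_equilibrium_unique (eps / 2) ltac:(lra) ltac:(simpl; lra))
    as [V [HV1 [HV2 HV]]].
  simpl in HV1, HV2. set (L := mirror B1 B2 V).
  assert (HLV : mirror B1 B2 L = V) by apply mirror_involutive. rewrite <- HLV in HV.
  assert (HL : fst xb - eps / 2 < fst L < fst xb /\ snd xb - eps / 2 < snd L < snd xb)
    by (unfold L; simpl; lra).
  clearbody L.
  set (delta := Rmin (Rmin (fst U - fst xb) (snd U - snd xb)) (Rmin (fst xb - fst L) (snd xb - snd L))).
  assert (Hdelta : 0 < delta /\ delta <= fst U - fst xb /\ delta <= snd U - snd xb /\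
                   delta <= fst xb - fst L /\ delta <= snd xb - snd L).
  { unfold delta.
    pose proof (Rmin_l (Rmin (fst U - fst xb) (snd U - snd xb)) (Rmin (fst xb - fst L) (snd xb - snd L))).
    pose proof (Rmin_r (Rmin (fst U - fst xb) (snd U - snd xb)) (Rmin (fst xb - fst L) (snd xb - snd L))).
    pose proof (Rmin_l (fst U - fst xb) (snd U - snd xb)). pose proof (Rmin_r (fst U - fst xb) (snd U - snd xb)).
    pose proof (Rmin_l (fst xb - fst L) (snd xb - snd L)). pose proof (Rmin_r (fst xb - fst L) (snd xb - snd L)).
    split; [repeat apply Rmin_glb_lt; lra | lra]. }
  clearbody delta. exists delta. split; [apply Hdelta|].
  intros x Hx Hx0 t Ht.
  pose proof (Rabs_fst_le_dist2 (x 0) xb) as D1. pose proof (Rabs_snd_le_dist2 (x 0) xb) as D2.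
  assert (A1 : Rabs (fst (x 0) - fst xb) < delta) by lra.
  assert (A2 : Rabs (snd (x 0) - snd xb) < delta) by lra.
  apply Rabs_def2 in A1. apply Rabs_def2 in A2.
  destruct (solution_stays_between _ _ _ _ x L U Hx HU HV ltac:(lra) ltac:(lra) t Ht).
  apply dist2_lt_of_lt; apply Rabs_def1; lra.
Qed.

End Mirror.

(** * The two-route model *)

(* [min (p / v, C)] with [v = F / C]: the density at which a link receiving the inflow [p]
   is in balance, in free flow if [p < F] and critical otherwise. *)
Definition balance_density (C F p : R) : R := Rmin (p * C / F) C.

Lemma balance_density_mono C F p p' : 0 < C -> 0 < F -> p <= p' ->
  balance_density C F p <= balance_density C F p'.
Proof.
  intros HC HF Hp. unfold balance_density. apply Rle_min_compat_r.
  unfold Rdiv. apply Rmult_le_compat_r; [apply Rlt_le, Rinv_0_lt_compat, HF|].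
  apply Rmult_le_compat_r; lra.
Qed.

Lemma inflow_lt_of_balance_lt C F p p' : 0 < C -> 0 < F ->
  balance_density C F p < balance_density C F p' -> p < p'.
Proof.
  intros HC HF Hlt. apply Rnot_le_lt. intros Hle.
  pose proof (balance_density_mono C F p' p HC HF Hle). lra.
Qed.

Lemma balance_density_pos C F p : 0 < C -> 0 < F -> 0 < p -> 0 < balance_density C F p.
Proof.
  intros HC HF Hp. unfold balance_density. apply Rmin_glb_lt; [|exact HC].
  apply Rdiv_lt_0_compat; [apply Rmult_lt_0_compat|]; assumption.
Qed.

Section Link.
Variables (B C F : R).
Hypotheses (HC : 0 < C) (HCB : C < B) (HF : 0 < F).

Lemma supply_as_min s : supply B C F s = Rmin F (F / (B - C) * (B - s)).
Proof.
  assert (Hk : F / (B - C) * (B - C) = F) by (field; lra).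
  assert (0 < F / (B - C)) by (apply Rdiv_lt_0_compat; lra).
  unfold supply. destruct (Rlt_dec s C).
  - rewrite Rmin_left; [reflexivity | nra].
  - rewrite Rmin_right; [reflexivity | nra].
Qed.

Lemma demand_as_min s : demand C F s = Rmin (F / C * s) F.
Proof.
  assert (Hk : F / C * C = F) by (field; lra).
  assert (0 < F / C) by (apply Rdiv_lt_0_compat; lra).
  unfold demand. destruct (Rlt_dec s C).
  - rewrite Rmin_left; [reflexivity | nra].
  - rewrite Rmin_right; [reflexivity | nra].
Qed.

Lemma demand_nondecr a b : a <= b -> demand C F a <= demand C F b.
Proof.
  intros Hab. rewrite !demand_as_min. apply Rle_min_compat_r.
  assert (0 < F / C) by (apply Rdiv_lt_0_compat; lra). nra.
Qed.

Lemma supply_minus_demand_decr a b : a < b ->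
  supply B C F b - demand C F b < supply B C F a - demand C F a.
Proof.
  intros Hab. unfold supply, demand.
  assert (Hs : F / (B - C) * (B - C) = F) by (field; lra).
  assert (Hd : F / C * C = F) by (field; lra).
  assert (0 < F / (B - C)) by (apply Rdiv_lt_0_compat; lra).
  assert (0 < F / C) by (apply Rdiv_lt_0_compat; lra).
  destruct (Rlt_dec a C), (Rlt_dec b C); nra.
Qed.

Lemma supply_lipschitz a b : Rabs (supply B C F a - supply B C F b) <= F / (B - C) * Rabs (a - b).
Proof.
  rewrite !supply_as_min. eapply Rle_trans; [apply Rmin_lipschitz|].
  rewrite Rminus_eq_0, Rabs_R0, Rplus_0_l.
  replace (F / (B - C) * (B - a) - F / (B - C) * (B - b)) with (F / (B - C) * - (a - b)) by ring.
  rewrite Rabs_mult, Rabs_Ropp, (Rabs_right (F / (B - C))); [lra|].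
  apply Rle_ge, Rlt_le, Rdiv_lt_0_compat; lra.
Qed.

Lemma demand_lipschitz a b : Rabs (demand C F a - demand C F b) <= F / C * Rabs (a - b).
Proof.
  rewrite !demand_as_min. eapply Rle_trans; [apply Rmin_lipschitz|].
  rewrite (Rminus_eq_0 F), Rabs_R0, Rplus_0_r.
  replace (F / C * a - F / C * b) with (F / C * (a - b)) by ring.
  rewrite Rabs_mult, (Rabs_right (F / C)); [lra|].
  apply Rle_ge, Rlt_le, Rdiv_lt_0_compat; lra.
Qed.

Lemma link_balance p s : 0 <= s <= B ->
  Rmin p (supply B C F s) - demand C F s = 0 -> s = balance_density C F p.
Proof.
  intros Hs Hbal. unfold balance_density. unfold supply, demand in Hbal.
  assert (0 < F / (B - C)) by (apply Rdiv_lt_0_compat; lra).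
  assert (0 < F / C) by (apply Rdiv_lt_0_compat; lra).
  destruct (Rlt_dec s C) as [Hlt|Hge].
  - assert (Hvs : F / C * s < F) by (replace F with (F / C * C) at 2 by (field; lra); nra).
    assert (Hp : p < F).
    { apply Rnot_le_lt. intros HFp. rewrite Rmin_right in Hbal by exact HFp. lra. }
    rewrite Rmin_left in Hbal by lra.
    assert (Hps : p * C / F = s) by (replace p with (F / C * s) by lra; field; lra).
    rewrite Hps, Rmin_left; lra.
  - assert (Hmin : Rmin p (F / (B - C) * (B - s)) = F) by lra.
    pose proof (Rmin_l p (F / (B - C) * (B - s))). pose proof (Rmin_r p (F / (B - C) * (B - s))).
    assert (Hkc : F / (B - C) * (B - C) = F) by (field; lra).
    assert (Hsc : s = C) by nra.
    assert (Hcp : C <= p * C / F).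
    { assert (0 < C / F) by (apply Rdiv_lt_0_compat; lra).
      assert (0 <= (p - F) * (C / F)) by (apply Rmult_le_pos; lra).
      replace (p * C / F) with (C + (p - F) * (C / F)) by (field; lra). lra. }
    rewrite Rmin_right; lra.
Qed.

End Link.

(* [fld1 (swap_model m)] is convertible to [fun y => fld2 m (swap y)], so every fact proved
   for route 1 also holds for route 2. *)
Definition swap_model (m : model) : model :=
  Model (B_2 m) (B_1 m) (C_2 m) (C_1 m) (F_2 m) (F_1 m) (phi m) (alpha m) (r02 m) (r01 m)
        (tau2 m) (tau1 m) (fun t => r2 m (swap t)) (fun t => r1 m (swap t)).

Lemma dist2_swap x y : dist2 (swap x) (swap y) = dist2 x y.
Proof. unfold dist2, swap. simpl. f_equal. ring. Qed.

Record admissible (m : model) : Prop := {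
  adm_C1 : 0 < C_1 m; adm_CB1 : C_1 m < B_1 m; adm_F1 : 0 < F_1 m;
  adm_C2 : 0 < C_2 m; adm_CB2 : C_2 m < B_2 m; adm_F2 : 0 < F_2 m;
  adm_phi : 0 < phi m;
  adm_R1_nonneg : forall x, in_Omega m x -> 0 <= Rx1 m x;
  adm_R2_nonneg : forall x, in_Omega m x -> 0 <= Rx2 m x;
  adm_R_sum : forall x, in_Omega m x -> Rx1 m x + Rx2 m x = 1;
  adm_R1_lip : lipschitz_on_Omega m (Rx1 m);
  adm_R2_lip : lipschitz_on_Omega m (Rx2 m);
  adm_R1_incr : forall a c d, 0 <= a <= B_1 m -> 0 <= c -> c < d -> d <= B_2 m ->
    Rx1 m (a, c) < Rx1 m (a, d);
  adm_R2_incr : forall a c d, 0 <= a <= B_2 m -> 0 <= c -> c < d -> d <= B_1 m ->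
    Rx2 m (c, a) < Rx2 m (d, a)
}.

Lemma admissible_swap m : admissible m -> admissible (swap_model m).
Proof.
  intros [HC1 HCB1 HF1 HC2 HCB2 HF2 Hphi HR1 HR2 Hsum [L1 HL1] [L2 HL2] Hincr1 Hincr2].
  assert (Hsw : forall x, in_Omega (swap_model m) x -> in_Omega m (swap x))
    by (intros x [H1 H2]; split; assumption).
  split; try assumption.
  - intros x Hx. exact (HR2 _ (Hsw x Hx)).
  - intros x Hx. exact (HR1 _ (Hsw x Hx)).
  - intros x Hx. rewrite Rplus_comm. exact (Hsum _ (Hsw x Hx)).
  - exists L2. intros x y Hx Hy. rewrite <- dist2_swap. exact (HL2 _ _ (Hsw x Hx) (Hsw y Hy)).
  - exists L1. intros x y Hx Hy. rewrite <- dist2_swap. exact (HL1 _ _ (Hsw x Hx) (Hsw y Hy)).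
Qed.

Lemma is_equilibrium_swap m x : is_equilibrium m x -> is_equilibrium (swap_model m) (swap x).
Proof. destruct x as [x1 x2]. intros [[H1 H2] [E1 E2]]. split; split; assumption. Qed.

Section Model.
Variable m : model.
Hypothesis Hm : admissible m.

Lemma Rx1_decr a b c : 0 <= a -> a < b -> b <= B_1 m -> 0 <= c <= B_2 m ->
  Rx1 m (b, c) < Rx1 m (a, c).
Proof.
  intros Ha Hab Hb Hc.
  pose proof (adm_R2_incr _ Hm c a b Hc Ha Hab Hb).
  pose proof (adm_R_sum _ Hm (a, c) ltac:(split; simpl; lra)).
  pose proof (adm_R_sum _ Hm (b, c) ltac:(split; simpl; lra)).
  lra.
Qed.

Lemma Rx1_nondecr a c d : 0 <= a <= B_1 m -> 0 <= c -> c <= d -> d <= B_2 m ->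
  Rx1 m (a, c) <= Rx1 m (a, d).
Proof.
  intros Ha Hc [Hcd|<-] Hd; [left; apply (adm_R1_incr _ Hm); assumption | apply Rle_refl].
Qed.

Lemma fld1_cooperative_rate : cooperative_rate (B_1 m) (B_2 m) (fld1 m).
Proof.
  pose proof (adm_C1 _ Hm) as HC. pose proof (adm_CB1 _ Hm) as HCB.
  pose proof (adm_F1 _ Hm) as HF. pose proof (adm_phi _ Hm) as Hphi.
  split; unfold fld1; simpl.
  - lra.
  - intros a b c Ha Hab Hb Hc. rewrite !Rmin_minus_distr. apply Rmin_lt_compat.
    + pose proof (Rx1_decr a b c Ha Hab Hb Hc).
      pose proof (demand_nondecr (C_1 m) (F_1 m) ltac:(lra) ltac:(lra) a b ltac:(lra)).
      apply Rplus_lt_le_compat; [apply Rmult_lt_compat_l|]; lra.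
    + apply supply_minus_demand_decr; lra.
  - intros a c d Ha Hc Hcd Hd. apply Rplus_le_compat_r, Rle_min_compat_r, Rmult_le_compat_l; [lra|].
    apply Rx1_nondecr; assumption.
  - intros c Hc. unfold supply, demand. destruct (Rlt_dec 0 (C_1 m)); [|lra].
    rewrite Rmult_0_r, Rminus_0_r. apply Rmin_glb; [|lra].
    apply Rmult_le_pos; [lra | apply (adm_R1_nonneg _ Hm); split; simpl; lra].
  - intros c Hc. unfold supply, demand. destruct (Rlt_dec (B_1 m) (C_1 m)); [lra|].
    rewrite Rminus_diag, Rmult_0_r. pose proof (Rmin_r (phi m * Rx1 m (B_1 m, c)) 0). lra.
  - destruct (adm_R1_lip _ Hm) as [L HL].
    set (kS := F_1 m / (B_1 m - C_1 m)). set (kD := F_1 m / C_1 m).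
    assert (0 < kS) by (apply Rdiv_lt_0_compat; lra). assert (0 < kD) by (apply Rdiv_lt_0_compat; lra).
    pose proof (Rabs_pos L) as HL0.
    exists (phi m * Rabs L + kS + kD). split; [pose proof (Rmult_le_pos _ _ (Rlt_le _ _ Hphi) HL0); lra|].
    intros a c a' c' Ha Hc Ha' Hc'.
    set (u := Rabs (a' - a)). set (v := Rabs (c' - c)).
    assert (Hu : 0 <= u) by apply Rabs_pos. assert (Hv : 0 <= v) by apply Rabs_pos.
    assert (HR : Rabs (phi m * Rx1 m (a', c') - phi m * Rx1 m (a, c)) <= phi m * Rabs L * (u + v)).
    { rewrite <- Rmult_minus_distr_l, Rabs_mult, (Rabs_right (phi m)), Rmult_assoc by lra.
      apply Rmult_le_compat_l; [lra|].
      eapply Rle_trans; [apply HL; split; simpl; lra|].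
      pose proof (dist2_le_abs_sum (a', c') (a, c)) as Hd. pose proof (Rle_abs L).
      assert (0 <= dist2 (a', c') (a, c)) by apply sqrt_pos.
      simpl in Hd. fold u v in Hd. nra. }
    pose proof (supply_lipschitz (B_1 m) (C_1 m) (F_1 m) ltac:(lra) ltac:(lra) a' a) as HS.
    pose proof (demand_lipschitz (C_1 m) (F_1 m) ltac:(lra) ltac:(lra) a' a) as HD.
    eapply Rle_trans; [apply Rmin_minus_lipschitz|].
    fold kS kD u in HS, HD. nra.
Qed.

Lemma equilibrium_fst_balance x : is_equilibrium m x ->
  fst x = balance_density (C_1 m) (F_1 m) (phi m * Rx1 m x).
Proof.
  intros [[Hx1 _] [E1 _]]. apply (link_balance (B_1 m)); try apply Hm; assumption.
Qed.

End Model.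

Lemma fld_cooperative m : admissible m -> cooperative_system (B_1 m) (B_2 m) (fld1 m) (fld2 m).
Proof.
  intros Hm. split; [exact (fld1_cooperative_rate m Hm) | exact (fld1_cooperative_rate _ (admissible_swap m Hm))].
Qed.

Lemma equilibrium_snd_balance m (Hm : admissible m) x1 x2 : is_equilibrium m (x1, x2) ->
  x2 = balance_density (C_2 m) (F_2 m) (phi m * Rx2 m (x1, x2)).
Proof.
  intros Hx. exact (equilibrium_fst_balance _ (admissible_swap m Hm) _ (is_equilibrium_swap m _ Hx)).
Qed.

(* More density on route 1 needs more inflow on route 1; since [R1] decreases in [x1] and
   increases in [x2], this forces more density, hence more inflow, on route 2 as well,
   which contradicts [R1 + R2 = 1]. *)
Lemma equilibrium_fst_not_lt m (Hm : admissible m) x y :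
  is_equilibrium m x -> is_equilibrium m y -> ~ fst x < fst y.
Proof.
  destruct x as [x1 x2], y as [y1 y2]. simpl. intros Hx Hy Hlt.
  pose proof (adm_phi _ Hm) as Hphi.
  pose proof (equilibrium_fst_balance m Hm _ Hx) as Hx1. pose proof (equilibrium_fst_balance m Hm _ Hy) as Hy1.
  pose proof (equilibrium_snd_balance m Hm _ _ Hx) as Hx2. pose proof (equilibrium_snd_balance m Hm _ _ Hy) as Hy2.
  destruct Hx as [[Hx1b Hx2b] _], Hy as [[Hy1b Hy2b] _]. simpl in *.
  assert (HR1 : Rx1 m (x1, x2) < Rx1 m (y1, y2)).
  { apply (Rmult_lt_reg_l (phi m)); [exact Hphi|].
    apply (inflow_lt_of_balance_lt (C_1 m) (F_1 m)); [apply Hm | apply Hm | rewrite <- Hx1, <- Hy1; exact Hlt]. }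
  assert (Hlt2 : x2 < y2).
  { apply Rnot_le_lt. intros Hle.
    pose proof (Rx1_decr m Hm x1 y1 y2 ltac:(lra) Hlt ltac:(lra) ltac:(lra)).
    pose proof (Rx1_nondecr m Hm x1 y2 x2 ltac:(lra) ltac:(lra) Hle ltac:(lra)). lra. }
  assert (HR2 : Rx2 m (x1, x2) < Rx2 m (y1, y2)).
  { apply (Rmult_lt_reg_l (phi m)); [exact Hphi|].
    apply (inflow_lt_of_balance_lt (C_2 m) (F_2 m)); [apply Hm | apply Hm | rewrite <- Hx2, <- Hy2; exact Hlt2]. }
  pose proof (adm_R_sum _ Hm (x1, x2) (conj Hx1b Hx2b)).
  pose proof (adm_R_sum _ Hm (y1, y2) (conj Hy1b Hy2b)). lra.
Qed.

Lemma equilibrium_unique m (Hm : admissible m) x y :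
  is_equilibrium m x -> is_equilibrium m y -> x = y.
Proof.
  intros Hx Hy.
  pose proof (equilibrium_fst_not_lt m Hm x y Hx Hy). pose proof (equilibrium_fst_not_lt m Hm y x Hy Hx).
  pose proof (equilibrium_fst_not_lt _ (admissible_swap m Hm) _ _ (is_equilibrium_swap m x Hx) (is_equilibrium_swap m y Hy)).
  pose proof (equilibrium_fst_not_lt _ (admissible_swap m Hm) _ _ (is_equilibrium_swap m y Hy) (is_equilibrium_swap m x Hx)).
  destruct x as [x1 x2], y as [y1 y2]. simpl in *. f_equal; lra.
Qed.

Lemma equilibrium_interior m (Hm : admissible m) x : is_equilibrium m x -> 0 < fst x < B_1 m.
Proof.
  destruct x as [x1 x2]. intros Hx. simpl.
  pose proof (equilibrium_fst_balance m Hm _ Hx) as Hx1. pose proof (equilibrium_snd_balance m Hm _ _ Hx) as Hx2.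
  destruct Hx as [[Hx1b Hx2b] _]. simpl in *.
  pose proof (adm_C1 _ Hm). pose proof (adm_CB1 _ Hm). pose proof (adm_F1 _ Hm). pose proof (adm_phi _ Hm).
  split; [|pose proof (Rmin_r (phi m * Rx1 m (x1, x2) * C_1 m / F_1 m) (C_1 m)); unfold balance_density in Hx1; lra].
  destruct (Rle_lt_or_eq_dec 0 (Rx1 m (x1, x2))) as [Hpos|Hzero]; [apply (adm_R1_nonneg _ Hm); split; assumption| |].
  - rewrite Hx1. apply balance_density_pos; try apply Hm. apply Rmult_lt_0_compat; assumption.
  - exfalso. rewrite <- Hzero, Rmult_0_r in Hx1.
    assert (Hx10 : x1 = 0) by (rewrite Hx1; unfold balance_density, Rdiv; rewrite Rmult_0_l, Rmult_0_l, Rmin_left; lra).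
    pose proof (adm_R_sum _ Hm (x1, x2) (conj Hx1b Hx2b)) as Hsum. rewrite <- Hzero in Hsum.
    assert (Hx2pos : 0 < x2).
    { rewrite Hx2. replace (Rx2 m (x1, x2)) with 1 by lra. apply balance_density_pos; try apply Hm. lra. }
    clear Hx1. subst x1. pose proof (adm_R1_incr _ Hm 0 0 x2 ltac:(lra) (Rle_refl 0) Hx2pos (proj2 Hx2b)).
    assert (H00 : in_Omega m (0, 0)) by (split; simpl; lra).
    pose proof (adm_R1_nonneg _ Hm (0, 0) H00). lra.
Qed.

Lemma routing_ratio_nonneg a r0 r : 0 < a <= 1 -> 0 <= r0 -> 0 <= r -> 0 <= (1 - a) * r0 + a * r.
Proof. intros Ha Hr0 Hr. pose proof (Rmult_le_pos (1 - a) r0). pose proof (Rmult_le_pos a r). lra. Qed.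

Lemma routing_ratio_lipschitz m a r0 (g : R * R -> R) : 0 <= a ->
  lipschitz_on_Omega m g -> lipschitz_on_Omega m (fun x => (1 - a) * r0 + a * g x).
Proof.
  intros Ha [L HL]. exists (a * L). intros x y Hx Hy.
  replace ((1 - a) * r0 + a * g x - ((1 - a) * r0 + a * g y)) with (a * (g x - g y)) by ring.
  rewrite Rabs_mult, Rabs_right, Rmult_assoc by lra. apply Rmult_le_compat_l; [lra | apply HL; assumption].
Qed.

Theorem theorem2 (m : model)
  (* positive parameters, C_i < B_i *)
  (hB1 : 0 < B_1 m) (hB2 : 0 < B_2 m) (hC1 : 0 < C_1 m) (hC2 : 0 < C_2 m)
  (hF1 : 0 < F_1 m) (hF2 : 0 < F_2 m)
  (hCB1 : C_1 m < B_1 m) (hCB2 : C_2 m < B_2 m)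
  (hphi : 0 < phi m)
  (* (A1) *)
  (A1 : phi m < F_1 m + F_2 m)
  (* (A2)-(A3) *)
  (halpha : 0 < alpha m <= 1)
  (hr0 : 0 <= r01 m /\ 0 <= r02 m /\ r01 m + r02 m = 1)
  (htau1 : forall s, 0 <= s <= B_1 m ->
      ex_derive (tau1 m) s /\ continuous (Derive (tau1 m)) s)
  (htau2 : forall s, 0 <= s <= B_2 m ->
      ex_derive (tau2 m) s /\ continuous (Derive (tau2 m)) s)
  (htau1_incr : forall a b, 0 <= a <= B_1 m -> 0 <= b <= B_1 m -> a < b -> tau1 m a < tau1 m b)
  (htau2_incr : forall a b, 0 <= a <= B_2 m -> 0 <= b <= B_2 m -> a < b -> tau2 m a < tau2 m b)
  (hr_bounds : forall x, in_Omega m x ->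
      0 <= r1 m (tau m x) <= 1 /\ 0 <= r2 m (tau m x) <= 1)
  (hr_sum : forall x, in_Omega m x -> r1 m (tau m x) + r2 m (tau m x) = 1)
  (hr1_lip : lipschitz_on_Omega m (fun x => r1 m (tau m x)))
  (hr2_lip : lipschitz_on_Omega m (fun x => r2 m (tau m x)))
  (hr1_C1 : C1_on_Omega m (fun x => r1 m (tau m x)))
  (hr2_C1 : C1_on_Omega m (fun x => r2 m (tau m x)))
  (* (A4): dR_1/dtau_2 > 0 and dR_2/dtau_1 > 0 (at every tau(x), x in Omega) *)
  (A4_12 : forall x, in_Omega m x -> exists d, 0 < d /\
      is_derive (fun s => Rt1 m (fst (tau m x), s)) (snd (tau m x)) d)
  (A4_21 : forall x, in_Omega m x -> exists d, 0 < d /\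
      is_derive (fun s => Rt2 m (s, snd (tau m x))) (fst (tau m x)) d)
  (* (A5) *)
  (A5_1 : F_1 m > (1 - alpha m) * phi m * r01 m)
  (A5_2 : F_2 m > (1 - alpha m) * phi m * r02 m)
  (* (A6) *)
  (A6_1 : phi m < E_1 m)
  (A6_2 : phi m < E_2 m) :
  exists xb : R * R,
    is_equilibrium m xb /\
    (forall y, is_equilibrium m y -> y = xb) /\
    lyapunov_stable m xb /\
    globally_attractive m xb.
Proof.
  destruct hr0 as [hr01 [hr02 hr0_sum]].
  assert (Hm : admissible m).
  { split; try assumption.
    - intros x Hx. apply routing_ratio_nonneg; [exact halpha | exact hr01 | apply hr_bounds, Hx].
    - intros x Hx. apply routing_ratio_nonneg; [exact halpha | exact hr02 | apply hr_bounds, Hx].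
    - intros x Hx. unfold Rx1, Rx2, Rt1, Rt2.
      transitivity ((1 - alpha m) * (r01 m + r02 m) + alpha m * (r1 m (tau m x) + r2 m (tau m x)));
        [ring | rewrite hr0_sum, (hr_sum x Hx); ring].
    - apply routing_ratio_lipschitz; [lra | exact hr1_lip].
    - apply routing_ratio_lipschitz; [lra | exact hr2_lip].
    - intros a c d Ha Hc Hcd Hd. unfold Rx1, tau. simpl.
      apply (comp_strictly_increasing (fun s => Rt1 m (tau1 m a, s)) (tau2 m) (B_2 m));
        [apply htau2 | exact htau2_incr | intros z Hz; exact (A4_12 (a, z) (conj Ha Hz)) | lra..].
    - intros a c d Ha Hc Hcd Hd. unfold Rx2, tau. simpl.
      apply (comp_strictly_increasing (fun s => Rt2 m (s, tau2 m a)) (tau1 m) (B_1 m));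
        [apply htau1 | exact htau1_incr | intros z Hz; exact (A4_21 (z, a) (conj Hz Ha)) | lra..]. }
  pose proof (fld_cooperative m Hm) as Hf.
  destruct (equilibrium_exists _ _ _ _ Hf) as [xb Hxb].
  assert (Huniq : forall y, is_equilibrium m y -> y = xb)
    by (intros y Hy; exact (equilibrium_unique m Hm y xb Hy Hxb)).
  exists xb. split; [exact Hxb|]. split; [exact Huniq|]. split.
  - exact (equilibrium_stable _ _ _ _ xb Hf Hxb Huniq (equilibrium_interior m Hm xb Hxb)).
  - intros x Hx. exact (equilibrium_attractive _ _ _ _ xb Hf Hxb Huniq x (flow_of_solution _ _ _ _ x Hx)).
Qed.
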